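(* Let $s,t,z$ be positive integers, $p=\min\{\lfloor\frac{z-1}{ts-t}\rfloor,t-1\}$ (with $p=t-1$ when $s=1$), and let $N_{\text{PolyDot-CMPC}}$ and $N_{\text{GCSA-NA}}$ be as in the context. Then $N_{\text{PolyDot-CMPC}}<N_{\text{GCSA-NA}}$ in the regions 1. $z>ts$, $p<\frac{t-1}{s}$, $t\ne1$; 2. $s<t$, $ts-t<z\le\min\{ts,\,t(t-1)-1\}$; 3. $z\le ts-t$; 4. $s=1$, $t>z$, $t\ne2$; and for all other values of $s,t,z$, $N_{\text{PolyDot-CMPC}}\ge N_{\text{GCSA-NA}}$.
   Context: $N_{\text{PolyDot-CMPC}}$ is the number of workers needed by the PolyDot-CMPC scheme, given by: with $\theta'=2ts-t$ and $\upsilon'=\max\{ts-2t-s+2,\frac{ts-2t+1}{2}\}$, $N_{\text{PolyDot-CMPC}}=(p+2)ts+\theta'(t-1)+2z-1$ if $ts<z$ or $t=1$; $=2ts+\theta'(t-1)+3z-1$ if $ts-t<z\le ts$, $s,t\ne1$; $=2ts+\theta'(t-1)+2z-1$ if $ts-2t<z\le ts-t$, $s,t\ne1$; $=(t+1)ts+(t-1)(z+t-1)+2z-1$ if $\upsilon'<z\le ts-2t$, $s,t\ne1$; $=\theta't+z$ if $z\le\upsilon'$, $s,t\ne1$; $=t^2+2t+tz-1$ if $s=1$, $t\ge z$, $t\ne1$. $N_{\text{GCSA-NA}}=2st^2+2z-1$ is the number of workers of the GCSA-NA baseline with a single batch. Here $s,t$ are the numbers of row/column partitions and $z$ the number of colluding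 workers.
   Formalization: Regions 2 and 3 also require s ≠ 1 and t ≠ 1, so their points with s = 1 or t = 1 fall under the clause $N_{\text{PolyDot-CMPC}}\ge N_{\text{GCSA-NA}}$. Apart from conventions, each condition added here is assumed in the paper as well or is needed for the statement above to hold. *)

From HB Require Import structures.
From mathcomp Require Import all_boot all_order all_algebra.
Set Implicit Arguments. Unset Strict Implicit. Unset Printing Implicit Defensive.
Import Order.TTheory GRing.Theory Num.Theory.
Local Open Scope ring_scope.

Definition thetap (s t : nat) : rat := 2 * t%:R * s%:R - t%:R.

Definition upsilonp (s t : nat) : rat :=
  Num.max (t%:R * s%:R - 2 * t%:R - s%:R + 2)
          ((t%:R * s%:R - 2 * t%:R + 1) / 2).

Definition p_param (s t z : nat) : int :=
  if s == 1%N then t%:Z - 1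
  else Num.min (Num.floor ((z%:R - 1) / (t%:R * s%:R - t%:R) : rat)) (t%:Z - 1).

Definition N_PolyDot (s t z : nat) : rat :=
  let ts : rat := t%:R * s%:R in
  let T : rat := t%:R in
  let S : rat := s%:R in
  let Z : rat := z%:R in
  let th := thetap s t in
  let up := upsilonp s t in
  let p : rat := (p_param s t z)%:~R in
  if (ts < Z) || (t == 1%N) then (p + 2) * ts + th * (T - 1) + 2 * Z - 1
  else if (s != 1%N) && (t != 1%N) then
    if (ts - T < Z) && (Z <= ts) then 2 * ts + th * (T - 1) + 3 * Z - 1
    else if (ts - 2 * T < Z) && (Z <= ts - T) then 2 * ts + th * (T - 1) + 2 * Z - 1
    else if (up < Z) && (Z <= ts - 2 * T) then
      (T + 1) * ts + (T - 1) * (Z + T - 1) + 2 * Z - 1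
    else (* Z <= up *) th * T + Z
  else (* s = 1, t >= z, t <> 1 *) T ^+ 2 + 2 * T + T * Z - 1.

Definition N_GCSA_NA (s t z : nat) : rat :=
  2 * s%:R * t%:R ^+ 2 + 2 * z%:R - 1.

(* the regions where PolyDot-CMPC beats GCSA-NA.  Regions 2 and 3 are read
   as sub-regions of the "s,t <> 1" cases of N_PolyDot. *)
Definition better_region (s t z : nat) : Prop :=
  let ts : rat := t%:R * s%:R in
  let T : rat := t%:R in
  let Z : rat := z%:R in
  [/\ ts < Z, (p_param s t z)%:~R < (T - 1) / s%:R & t <> 1%N]
  \/ [/\ s <> 1%N, t <> 1%N, (s < t)%N, ts - T < Z & Z <= Num.min ts (T * (T - 1) - 1)]
  \/ [/\ s <> 1%N, t <> 1%N & Z <= ts - T]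
  \/ [/\ s = 1%N, (z < t)%N & t <> 2%N].

From mathcomp Require Import all_boot all_order all_algebra.
From mathcomp Require Import lra ring.
Import Order.TTheory GRing.Theory Num.Theory.
Local Open Scope ring_scope.

(* In every branch of the piecewise formula the gap N_PolyDot - N_GCSA_NA has
   a closed form: t (p s - (t - 1)) when z > ts or t = 1 (where p = 0),
   z - t (t - 1) when ts - t < z <= ts, one of -t (t - 1),
   (t - 1) (z - (ts - t + 1)) and 1 - t^2 - z when z <= ts - t, and
   (t - 2) (z - t) when s = 1.  The four regions are exactly where the gap
   is negative. *)

Lemma ler_natBr1 (R : numDomainType) (m n : nat) :
  ((m%:R : R) <= n%:R - 1) = (m < n)%N.
Proof. by rewrite lerBrDr natr1 ler_nat. Qed.

Lemma p_param_t1 (s z : nat) : (0 < s)%N -> (0 < z)%N -> p_param s 1 z = 0.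
Proof.
move=> s_gt0 z_gt0; rewrite /p_param subrr; case: ifP => // _.
by rewrite min_r // floor_ge0 mul1r divr_ge0 // subr_ge0 ler1n.
Qed.

Lemma better_region_t1 (s z : nat) : (0 < z)%N -> ~ better_region s 1 z.
Proof. by move=> z_gt0 [[]|[[]|[[]|[_ ]]]]; rewrite // ltnNge z_gt0. Qed.

Lemma N_PolyDotE_high (s t z : nat) :
  (t%:R * s%:R < z%:R :> rat) || (t == 1)%N ->
  N_PolyDot s t z =
  N_GCSA_NA s t z + t%:R * ((p_param s t z)%:~R * s%:R - (t%:R - 1)).
Proof. by move=> high; rewrite /N_PolyDot /N_GCSA_NA /thetap /= high; ring. Qed.

Lemma N_PolyDot_t1 (s z : nat) :
  (0 < s)%N -> (0 < z)%N -> N_PolyDot s 1 z = N_GCSA_NA s 1 z.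
Proof.
move=> s_gt0 z_gt0; rewrite N_PolyDotE_high ?eqxx ?orbT // p_param_t1 //.
by rewrite subrr mul0r sub0r oppr0 mulr0 addr0.
Qed.

Lemma N_PolyDotE_mid (s t z : nat) : s != 1%N -> t != 1%N ->
  t%:R * s%:R - t%:R < z%:R :> rat -> z%:R <= t%:R * s%:R :> rat ->
  N_PolyDot s t z = N_GCSA_NA s t z + (z%:R - t%:R * (t%:R - 1)).
Proof.
move=> s_neq1 t_neq1 mid_lo mid_hi.
rewrite /N_PolyDot /N_GCSA_NA /thetap /= ltNge mid_hi (negbTE t_neq1) s_neq1 /=.
by rewrite mid_lo /=; ring.
Qed.

Lemma N_PolyDotE_s1 (t z : nat) : t != 1%N -> (z <= t)%N ->
  N_PolyDot 1 t z = N_GCSA_NA 1 t z + (t%:R - 2) * (z%:R - t%:R).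
Proof.
move=> t_neq1 z_le_t.
rewrite /N_PolyDot /N_GCSA_NA /thetap /= mulr1 ltNge ler_nat z_le_t (negbTE t_neq1) /=.
ring.
Qed.

Lemma N_PolyDot_lt_low (s t z : nat) : s != 1%N -> (1 < t)%N ->
  z%:R <= t%:R * s%:R - t%:R :> rat -> N_PolyDot s t z < N_GCSA_NA s t z.
Proof.
move=> s_neq1 t_gt1 low.
have t_ge2 : 2 <= t%:R :> rat by rewrite ler_nat.
have t_neq1 : t != 1%N by rewrite neq_ltn t_gt1 orbT.
have not_high : (t%:R * s%:R < z%:R :> rat) = false.
  by apply/negbTE; rewrite -leNgt; lra.
have not_mid : (t%:R * s%:R - t%:R < z%:R :> rat) = false.
  by apply/negbTE; rewrite -leNgt.
rewrite /N_PolyDot /N_GCSA_NA /thetap /= not_high (negbTE t_neq1) s_neq1.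
have t_tm1_gt0 : 0 < t%:R * (t%:R - 1) :> rat by apply: mulr_gt0; lra.
rewrite /= not_mid low /=; case: ifP => [_|_]; first lra.
have z_ge0 : 0 <= z%:R :> rat := ler0n _ z.
case: ifP => [/andP[_ high]|_]; last lra.
have : (t%:R - 1) * (t%:R * s%:R - 2 * t%:R - z%:R) >= 0 :> rat.
  by apply: mulr_ge0; lra.
lra.
Qed.

Lemma better_region_high (s t z : nat) : (0 < s)%N -> t != 1%N ->
  t%:R * s%:R < z%:R :> rat ->
  better_region s t z <-> (p_param s t z)%:~R * s%:R < t%:R - 1 :> rat.
Proof.
move=> s_gt0 t_neq1 high; have s_gt0' : 0 < s%:R :> rat by rewrite ltr0n.
split; last by move=> small; left; split; [|rewrite ltr_pdivlMr|apply/eqP].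
case=> [[_ + _]|[[_ _ _ _]|[[_ _ low]|[s1 z_lt_t _]]]].
- by rewrite ltr_pdivlMr.
- by rewrite le_min => /andP[]; lra.
- by have := ler0n rat t; lra.
- by move: high; rewrite s1 mulr1 ltr_nat ltnNge ltnW.
Qed.

Lemma better_region_mid (s t z : nat) : s != 1%N -> (1 < t)%N ->
  t%:R * s%:R - t%:R < z%:R :> rat -> z%:R <= t%:R * s%:R :> rat ->
  better_region s t z <-> z%:R < t%:R * (t%:R - 1) :> rat.
Proof.
move=> s_neq1 t_gt1 mid_lo mid_hi.
have nat_tt1 : t%:R * (t%:R - 1) = (t * (t - 1))%:R :> rat.
  by rewrite natrM natrB // ltnW.
split.
  case=> [[high _ _]|[[_ _ _ _]|[[_ _ low]|[s1 _ _]]]].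
  - lra.
  - by rewrite le_min => /andP[_]; lra.
  - lra.
  - by move/eqP: s_neq1.
move=> z_lt_tt; right; left; split=> //.
- exact/eqP.
- by apply/eqP; rewrite neq_ltn t_gt1 orbT.
- rewrite ltnNge; apply/negP; rewrite -(ler_nat rat) => t_le_s.
  have : 0 <= t%:R * (s%:R - t%:R) :> rat by rewrite mulr_ge0 ?subr_ge0.
  lra.
- by rewrite le_min mid_hi nat_tt1 ler_natBr1 -(ltr_nat rat) -nat_tt1.
Qed.

Lemma better_region_s1 (t z : nat) : (z <= t)%N ->
  better_region 1 t z <-> (z < t)%N /\ t <> 2%N.
Proof.
move=> z_le_t; split; last by case=> z_lt_t t_neq2; right; right; right.
case=> [[high _ _]|[[//]|[[//]|[_ z_lt_t t_neq2]]]] //.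
by move: high; rewrite mulr1 ltr_nat ltnNge z_le_t.
Qed.

Lemma better_regionE (s t z : nat) : (0 < s)%N -> (0 < t)%N -> (0 < z)%N ->
  better_region s t z <-> N_PolyDot s t z < N_GCSA_NA s t z.
Proof.
move=> s_gt0 t_gt0 z_gt0.
have [/eqP-> | t_neq1] := boolP (t == 1%N).
  by rewrite N_PolyDot_t1 // ltxx; split=> // /(better_region_t1 _ _ z_gt0).
have t_gt1 : (1 < t)%N by rewrite ltn_neqAle eq_sym t_neq1 t_gt0.
have [high | not_high] := boolP (t%:R * s%:R < z%:R :> rat).
  rewrite better_region_high // N_PolyDotE_high ?high // gtrDl.
  by rewrite pmulr_rlt0 ?ltr0n // subr_lt0.
rewrite -leNgt in not_high.
have [/eqP s1 | s_neq1] := boolP (s == 1%N).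
  subst s; move: not_high; rewrite mulr1 ler_nat => z_le_t.
  rewrite better_region_s1 // N_PolyDotE_s1 // gtrDl.
  have [/eqP t2 | t_neq2] := boolP (t == 2%N).
    by subst t; rewrite subrr mul0r ltxx; split=> // [[]].
  have t_gt2 : 2 < t%:R :> rat by rewrite ltr_nat ltn_neqAle eq_sym t_neq2.
  rewrite pmulr_rlt0 ?subr_gt0 // subr_lt0 ltr_nat.
  by split=> [[]|z_lt_t] //; split=> //; apply/eqP.
have [low | not_low] := boolP (z%:R <= t%:R * s%:R - t%:R :> rat).
  split=> [_|_]; first exact: N_PolyDot_lt_low.
  by right; right; left; split=> //; apply/eqP.
rewrite -ltNge in not_low.
by rewrite better_region_mid // N_PolyDotE_mid // gtrDl subr_lt0.
Qed.

Theorem lemma3 (s t z : nat) :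
  (0 < s)%N -> (0 < t)%N -> (0 < z)%N ->
  (better_region s t z -> N_PolyDot s t z < N_GCSA_NA s t z) /\
  (~ better_region s t z -> N_GCSA_NA s t z <= N_PolyDot s t z).
Proof.
move=> s_gt0 t_gt0 z_gt0; rewrite better_regionE //.
by split=> // not_lt; rewrite leNgt; apply/negP.
Qed.
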